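(* With the notation of the context, let $$\rho^*=\frac{\eta T}{W\left(\lambda\gamma s_0\eta^2Te^{(\nu-\frac{\eta^2}{2})T}\right)}\frac{\mu-r}{\sigma}.$$ If $\rho^*\le-1$, then $d$ is increasing on $(-1,1)$. If $\rho^*\ge1$, then $d$ is decreasing on $(-1,1)$. If $-1<\rho^*<1$, then $d$ is decreasing on $(-1,\rho^* )$ and increasing on $(\rho^*,1)$, $$d(\rho^* )=d(0)-e^{-rT}\frac{(\mu-r)^2T}{2\gamma\sigma^2},\qquad g(\rho^* )=g(0)-e^{-rT}\frac{(\mu-r)^2T}{2\gamma\sigma^2},$$ and moreover $$\inf_{\rho\in(-1,1)}p(\rho)\ge d(0)-\frac{e^{-rT}}{2\gamma}\left(\frac{\mu-r}{\sigma}\right)^2T,\qquad \inf_{\rho\in(-1,1)}V_\rho(x_0,s_0,\lambda)\ge-\frac1\gamma\exp\left(-\gamma e^{rT}(x_0+d(0))\right).$$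
   Context: Fix $T>0$, $r,\nu,\mu,x_0\in\mathbb R$, $\eta>0$, $\sigma>0$, $s_0>0$, $\lambda>0$, $\gamma>0$; $N$ is a standard Gaussian random variable; $W$ is the Lambert function (inverse of $x\in(-1,\infty)\mapsto xe^x$). For $\rho\in(-1,1)$ let $\theta(\rho)=\lambda\gamma(1-\rho^2)$, $w(\rho)=W\left(s_0\eta^2Te^{(\nu-\eta\rho\frac{\mu-r}{\sigma}-\frac{\eta^2}{2})T}\theta(\rho)\right)$, $$d(\rho)=\frac{\lambda e^{-rT}}{\theta(\rho)\eta^2T}w(\rho)\left(1+\frac{w(\rho)}2\right),\qquad g(\rho)=\frac{\lambda e^{-rT}}{\theta(\rho)}\frac{w(\rho)}{\eta^2T}\left(e^{\frac{\eta^2}{2}T}+\frac{w(\rho)}2\right),$$ $$p(\rho)=-\frac{e^{-rT}}{\gamma(1-\rho^2)}\ln\mathbb E\exp\left(-\theta(\rho)s_0e^{(\nu-\eta\rho\frac{\mu-r}{\sigma}-\frac{\eta^2}{2})T}e^{\eta\sqrt TN}\right),$$ $$V_\rho(x_0,s_0,\lambda)=-\frac1\gamma\exp\left(-\gamma e^{rT}(x_0+p(\rho))-\frac{(\mu-r)^2}{2\sigma^2}T\right).$$ Here $p(\rho)$ and $V_\rho$ are the asking reservation price and the value function of an exponential-utility agent receiving $\lambda$ units of a non-traded stock ($dS=S(\nu dt+\eta dZ)$), hedging with a traded asset ($dP=P(\mu dt+\sigma dB)$) of correlation $\rho$, bond rate $r$. *)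

From HB Require Import structures.
From mathcomp Require Import all_boot all_order all_algebra.
From mathcomp Require Import all_classical all_reals all_analysis.
Set Implicit Arguments. Unset Strict Implicit. Unset Printing Implicit Defensive.
Import Order.TTheory GRing.Theory Num.Theory.
Local Open Scope classical_set_scope.
Local Open Scope ring_scope.

Section Defs.
Variable R : realType.

(* Lambert W function: inverse of w in (-1, oo) |-> w e^w (defined on (-1/e, oo));
   outside its domain it returns the default 0 (never used here). *)
Definition lambertW (x : R) : R :=
  xget 0 [set w : R | -1 < w /\ w * expR w = x].

Variables (T r nu mu eta sigma s0 lambda gamma : R).

Definition mpr : R := (mu - r) / sigma.

Definition theta (rho : R) : R := lambda * gamma * (1 - rho ^+ 2).

Definition drift (rho : R) : R := (nu - eta * rho * mpr - eta ^+ 2 / 2) * T.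

Definition wfun (rho : R) : R :=
  lambertW (s0 * eta ^+ 2 * T * expR (drift rho) * theta rho).

Definition dfun (rho : R) : R :=
  lambda * expR (- r * T) / (theta rho * eta ^+ 2 * T) * wfun rho * (1 + wfun rho / 2).

Definition gfun (rho : R) : R :=
  lambda * expR (- r * T) / theta rho * (wfun rho / (eta ^+ 2 * T))
    * (expR (eta ^+ 2 / 2 * T) + wfun rho / 2).

Definition expect_term (rho : R) : R :=
  fine (\int[normal_prob 0 1]_x
          (expR (- (theta rho * s0 * expR (drift rho) * expR (eta * Num.sqrt T * x))))%:E)%E.

Definition pfun (rho : R) : R :=
  - (expR (- r * T) / (gamma * (1 - rho ^+ 2))) * ln (expect_term rho).

Definition Vfun (x0 rho : R) : R :=
  - (1 / gamma) * expR (- gamma * expR (r * T) * (x0 + pfun rho) - mpr ^+ 2 / 2 * T).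

Definition rhostar : R :=
  eta * T / lambertW (lambda * gamma * s0 * eta ^+ 2 * T * expR ((nu - eta ^+ 2 / 2) * T)) * mpr.

End Defs.

(* Put [W0 = W(lambda gamma s0 eta^2 T e^((nu - eta^2/2) T))], so that
   [W0 rhostar = eta T (mu - r) / sigma].  For [rho] in (-1, 1), [q = w(rho) / (1 - rho^2)] is
   the unique positive root of [q e^(q (1 - rho^2) + W0 rhostar rho) = W0 e^W0], and [d(rho)] is
   a positive multiple of [q + q^2 (1 - rho^2) / 2].  This quantity is the maximum over [c > 0]
   of a concave function of [c] depending on [rho]; evaluating it at the maximizer belonging to
   another point gives a tangent inequality between any two values of [rho], from which the
   monotonicity on each side of [rhostar] follows.  Both [0] and [rhostar] have root [W0], which
   gives the values at [rhostar] and the global minimum of [d].  Finally [d <= p]: the bound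
   [e^x >= 1 + x] reduces the Laplace transform of the lognormal variable in [p] to an explicit
   Gaussian exponential moment. *)

From HB Require Import structures.
From mathcomp Require Import all_boot all_order all_algebra.
From mathcomp Require Import all_classical all_reals all_analysis.
From mathcomp Require Import ring lra measurable_realfun.
Import Order.TTheory GRing.Theory Num.Theory.
Import numFieldTopology.Exports numFieldNormedType.Exports.
Set Implicit Arguments.
Unset Strict Implicit.
Unset Printing Implicit Defensive.
Local Open Scope ring_scope.

Section lambertW.
Variable R : realType.

Lemma lambertW_spec (x : R) : 0 < x ->
  0 < lambertW x /\ lambertW x * expR (lambertW x) = x.
Proof.
move=> x_gt0.
have [w w_ge0 wE] : exists2 w, w \in `[0, x] & w * expR w = x.
  apply: IVT; first exact: ltW.
    have xexpR_cont : continuous (fun t : R => t * expR t).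
      by move=> t; apply: continuousM; [exact: cvg_id | exact: continuous_expR].
    exact: continuous_subspaceT.
  rewrite mul0r ge_min le_max (ltW x_gt0) ler_peMr ?(ltW x_gt0) ?orbT //.
  by have := expR_ge1Dx x; lra.
have [W_gtN1 WE] : -1 < lambertW x /\ lambertW x * expR (lambertW x) = x.
  apply: (xgetPex 0 (P := [set w : R | -1 < w /\ w * expR w = x])).
  by exists w; split=> //; move: w_ge0; rewrite in_itv /=; lra.
split=> //.
by move: x_gt0; rewrite -{1}WE pmulr_lgt0 ?expR_gt0.
Qed.

Lemma ler_mul_expRM (y : R) : 0 <= y ->
  {in Num.pos &, {mono (fun q => q * expR (q * y)) : q1 q2 / q1 <= q2}}.
Proof.
move=> y_ge0; apply: le_mono_in => q1 q2; rewrite !posrE => q1_gt0 q2_gt0 q12.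
apply: (@lt_le_trans _ _ (q2 * expR (q1 * y))); first by rewrite ltr_pM2r ?expR_gt0.
by rewrite ler_pM2l // ler_expR ler_wpM2r // ltW.
Qed.

End lambertW.

Definition profile {R : realType} (rho q : R) : R := q + q ^+ 2 * (1 - rho ^+ 2) / 2.

Definition profile_root {R : realType} (W0 rs rho q : R) : Prop :=
  0 < q /\ q * expR (q * (1 - rho ^+ 2) + W0 * rs * rho) = W0 * expR W0.

Section profile.
Variables (R : realType) (W0 : R).
Hypothesis W0_gt0 : 0 < W0.
Implicit Types rs rho a b q qa qb : R.

Lemma profile_root_opp rs rho q :
  profile_root W0 rs rho q -> profile_root W0 (- rs) (- rho) q.
Proof. by rewrite /profile_root sqrrN !mulrN mulNr opprK. Qed.

Lemma profile_root0 rs : profile_root W0 rs 0 W0.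
Proof. by split=> //; congr (_ * expR _); ring. Qed.

Lemma profile_root_rs rs : profile_root W0 rs rs W0.
Proof. by split=> //; congr (_ * expR _); ring. Qed.

Lemma profile_root_unique rs rho q1 q2 : 0 <= 1 - rho ^+ 2 ->
  profile_root W0 rs rho q1 -> profile_root W0 rs rho q2 -> q1 = q2.
Proof.
move=> y_ge0 [q1_gt0 E1] [q2_gt0 E2].
have := inc_inj_in (ler_mul_expRM y_ge0); apply; rewrite ?posrE //=.
apply: (mulIf (lt0r_neq0 (expR_gt0 (W0 * rs * rho)))).
by move: E1 E2; rewrite !expRD !mulrA => -> ->.
Qed.

(* [q_b] maximizes [c |-> c (1 + W0 + ln W0 - W0 rs b - ln c) - c^2 (1 - b^2) / 2],
   with maximum [profile b q_b]; the left-hand side is its value at [c = q_a]. *)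
Lemma profile_tangent rs a b qa qb : 0 <= 1 - b ^+ 2 ->
  profile_root W0 rs a qa -> profile_root W0 rs b qb ->
  profile a qa + qa * (b - a) * (qa * (a + b) / 2 - W0 * rs) <= profile b qb.
Proof.
move=> yb_ge0 [qa_gt0 Ea] [qb_gt0 Eb].
set Xa := qa * (1 - a ^+ 2) + W0 * rs * a in Ea.
set Xb := qb * (1 - b ^+ 2) + W0 * rs * b in Eb.
have qbE : qb = qa * expR (Xa - Xb).
  apply: (mulIf (lt0r_neq0 (expR_gt0 Xb))).
  by rewrite Eb -mulrA -expRD subrK Ea.
have lin : qa * (1 + (Xa - Xb)) <= qb.
  by rewrite [leRHS]qbE ler_pM2l // expR_ge1Dx.
have sq : 0 <= (qb - qa) ^+ 2 * (1 - b ^+ 2) by rewrite mulr_ge0 ?sqr_ge0.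
have -> : profile b qb = profile a qa + qa * (b - a) * (qa * (a + b) / 2 - W0 * rs)
    + (qb - qa * (1 + (Xa - Xb))) + (qb - qa) ^+ 2 * (1 - b ^+ 2) / 2.
  by rewrite /profile /Xa /Xb; field.
lra.
Qed.

Lemma profile_ge_rs rs b qb : 0 <= 1 - b ^+ 2 ->
  profile_root W0 rs b qb -> profile rs W0 <= profile b qb.
Proof.
move=> yb_ge0 rb; have := profile_tangent yb_ge0 (profile_root_rs rs) rb.
have -> : W0 * (b - rs) * (W0 * (rs + b) / 2 - W0 * rs) = (W0 * (b - rs)) ^+ 2 / 2 by field.
by have := sqr_ge0 (W0 * (b - rs)); lra.
Qed.

Lemma profile_root_sign rs a qa : -1 < a -> a < 1 ->
  profile_root W0 rs a qa -> rs <= a -> W0 * rs <= a * qa.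
Proof.
move=> a_gtN1 a_lt1 [qa_gt0 Ea] rs_le_a.
have ya_ge0 : 0 <= 1 - a ^+ 2 by nra.
have W0_pos : W0 \in Num.pos by rewrite posrE.
have qa_pos : qa \in Num.pos by rewrite posrE.
(* [q_a] lies above or below [W0] according to the sign of [a (a - rs)]. *)
have cmp : qa * expR (qa * (1 - a ^+ 2))
    = W0 * expR (W0 * (1 - a ^+ 2)) * expR (W0 * (a * (a - rs))).
  apply: (mulIf (lt0r_neq0 (expR_gt0 (W0 * rs * a)))).
  rewrite -(mulrA qa) -expRD Ea -!(mulrA W0) -!expRD; congr (_ * expR _); ring.
have W0_a_rs : 0 <= W0 * (a - rs) by rewrite mulr_ge0 ?subr_ge0 // ltW.
have [a_ge0 | a_lt0] := leP 0 a.
- have : W0 <= qa.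
    rewrite -(ler_mul_expRM ya_ge0 W0_pos qa_pos) /= cmp ler_pMr ?mulr_gt0 ?expR_gt0 //.
    by rewrite -expR0 ler_expR pmulr_rge0 //; nra.
  move=> W0_le_qa; have : 0 <= a * (qa - W0) by rewrite mulr_ge0 ?subr_ge0.
  lra.
- have : qa <= W0.
    rewrite -(ler_mul_expRM ya_ge0 qa_pos W0_pos) /= cmp ger_pMr ?mulr_gt0 ?expR_gt0 //.
    by rewrite -expR0 ler_expR pmulr_rle0 //; nra.
  move=> qa_le_W0; have : 0 <= - a * (W0 - qa) by rewrite mulr_ge0 ?subr_ge0 ?oppr_ge0 // ltW.
  lra.
Qed.

Lemma profile_increasing rs a b qa qb : -1 < a -> a < b -> b < 1 -> rs <= a ->
  profile_root W0 rs a qa -> profile_root W0 rs b qb -> profile a qa < profile b qb.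
Proof.
move=> a_gtN1 ab b_lt1 rs_le_a ra rb.
have yb_ge0 : 0 <= 1 - b ^+ 2 by nra.
have := profile_tangent yb_ge0 ra rb; have [qa_gt0 _] := ra.
have := profile_root_sign a_gtN1 (lt_trans ab b_lt1) ra rs_le_a.
have : 0 < qa * (b - a) by rewrite mulr_gt0 // subr_gt0.
nra.
Qed.

Lemma profile_decreasing rs a b qa qb : -1 < a -> a < b -> b < 1 -> b <= rs ->
  profile_root W0 rs a qa -> profile_root W0 rs b qb -> profile b qb < profile a qa.
Proof.
move=> a_gtN1 ab b_lt1 b_le_rs ra rb.
have := profile_increasing (rs := - rs) (_ : -1 < - b) (_ : - b < - a) (_ : - a < 1)
  (_ : - rs <= - b) (profile_root_opp rb) (profile_root_opp ra).
by rewrite /profile !sqrrN; apply; lra.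
Qed.

End profile.

Section probability_integral.
Context d (T : measurableType d) (R : realType).
Local Open Scope classical_set_scope.
Local Open Scope ereal_scope.

Lemma probability_integral_gt0 (P : probability T R) (f : T -> R) :
  measurable_fun [set: T] f -> (forall x, 0 < f x)%R -> 0 < \int[P]_x (f x)%:E.
Proof.
move=> mf f_gt0.
have mfE : measurable_fun [set: T] (EFin \o f) by exact/measurable_EFinP.
rewrite lt0e integral_ge0 ?andbT => [|x _]; last by rewrite lee_fin ltW.
apply/eqP => int_f0.
have [N [mN PN0 fN]] : ae_eq P [set: T] (EFin \o f) (cst 0).
  apply/(ae_eq_integral_abs _ measurableT mfE); rewrite -int_f0.
  by apply: eq_integral => x _; rewrite gee0_abs // lee_fin ltW.
have : P [set: T] <= P N.
  by apply: le_measure; rewrite ?inE // => x _; apply: fN => /(_ I) /=[] /eqP; rewrite gt_eqF.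
by rewrite probability_setT PN0 lee_fin ler10.
Qed.

End probability_integral.

Section normal_integrals.
Variable R : realType.
Local Open Scope classical_set_scope.
Local Open Scope ereal_scope.
Local Notation mu := (@lebesgue_measure R).

Lemma ge0_integral_normal_prob (m s : R) (f : R -> \bar R) :
  (forall x, 0 <= f x) -> measurable_fun [set: R] f ->
  \int[normal_prob m s]_x f x = \int[mu]_x (f x * (normal_pdf m s x)%:E).
Proof.
move=> f_ge0 mf; have numu := normal_prob_dominates m s.
rewrite -(Radon_Nikodym_SigmaFinite.change_of_variables numu) //.
have RN_int := Radon_Nikodym_SigmaFinite.f_integrable numu.
apply: ae_eq_integral => //.
- exact: emeasurable_funM (measurable_int _ RN_int).
- by apply: emeasurable_funM => //; apply/measurableT_comp => //; exact: measurable_normal_pdf.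
- apply: ae_eqe_mul2l; apply: integral_ae_eq => //.
  + by apply/measurableT_comp => //; exact: measurable_normal_pdf.
  + by move=> A _ mA; rewrite -Radon_Nikodym_SigmaFinite.f_integral.
Qed.

(* [e^(-c x)] times the standard normal density is [e^(c^2/2)] times the density
   of [N(-c, 1)]. *)
Lemma normal_prob_integral_le_expR (f : R -> R) (a c : R) :
  measurable_fun [set: R] f -> (forall x, 0 <= f x)%R ->
  (forall x, f x <= expR (a - c * x))%R ->
  \int[normal_prob 0 1]_x (f x)%:E <= (expR (a + c ^+ 2 / 2))%:E.
Proof.
move=> mf f_ge0 f_le.
rewrite ge0_integral_normal_prob //; last exact/measurable_EFinP.
apply: (@le_trans _ _ (\int[mu]_x ((expR (a + c ^+ 2 / 2))%:E * (normal_pdf (- c) 1 x)%:E))).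
  apply: ge0_le_integral => //.
  - by move=> x _; rewrite -EFinM lee_fin mulr_ge0 ?normal_pdf_ge0.
  - by apply: emeasurable_funM; apply/measurable_EFinP => //; exact: measurable_normal_pdf.
  - by apply: emeasurable_funM => //; apply/measurable_EFinP; exact: measurable_normal_pdf.
  - move=> x _; rewrite -!EFinM lee_fin.
    have pdfE m : normal_pdf m 1 x = (normal_peak 1 * expR (- (x - m) ^+ 2 / 2))%R.
      by rewrite /normal_pdf oner_eq0 /normal_fun expr1n.
    rewrite !pdfE mulrCA [leRHS]mulrCA ler_wpM2l ?normal_peak_ge0 //.
    apply: (le_trans (ler_wpM2r (expR_ge0 _) (f_le x))).
    by rewrite -!expRD ler_expR; lra.
by rewrite integralZl ?integral_normal_pdf ?mule1 //; exact: integrable_normal_pdf.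
Qed.

End normal_integrals.

Definition lognormal_laplace {R : realType} (s y : R) : R :=
  fine (\int[normal_prob 0 1]_x (expR (- (y * expR (s * x))))%:E)%E.

Section lognormal_laplace.
Variable R : realType.
Implicit Types s y w : R.

(* Bound [y e^(s x) = (w / s^2) e^(w + s x)] below by [(w / s^2) (1 + w + s x)];
   the resulting exponential moment of the Gaussian is explicit. *)
Lemma lognormal_laplace_bound s y w : 0 < s -> 0 < y -> 0 < w -> w * expR w = s ^+ 2 * y ->
  0 < lognormal_laplace s y <= expR (- (w + w ^+ 2 / 2) / s ^+ 2).
Proof.
move=> s_gt0 y_gt0 w_gt0 wE.
have yE : y = w * expR w / s ^+ 2 by rewrite wE; field; rewrite gt_eqF.
pose h x := expR (- (y * expR (s * x))).
have mh : measurable_fun [set: R] h.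
  apply: measurableT_comp => //; apply: measurableT_comp => //.
  by apply: measurable_funM => //; apply: measurableT_comp => //; exact: measurable_funM.
have int_le : (\int[normal_prob 0 1]_x (h x)%:E <= (expR (- (w + w ^+ 2 / 2) / s ^+ 2))%:E)%E.
  have -> : - (w + w ^+ 2 / 2) / s ^+ 2 = - (w * (1 + w)) / s ^+ 2 + (w / s) ^+ 2 / 2.
    by field; rewrite gt_eqF.
  apply: normal_prob_integral_le_expR => // [x|x]; rewrite /h ?expR_ge0 //.
  have -> : - (w * (1 + w)) / s ^+ 2 - w / s * x = - (w / s ^+ 2 * (1 + (w + s * x))).
    by field; rewrite gt_eqF.
  have -> : y * expR (s * x) = w / s ^+ 2 * expR (w + s * x).
    by rewrite expRD yE; field; rewrite gt_eqF.
  by rewrite ler_expR lerN2 ler_pM2l ?expR_ge1Dx ?divr_gt0 ?exprn_gt0.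
have int_gt0 := probability_integral_gt0 (normal_prob 0 1) mh (fun x => expR_gt0 _).
have int_fin : (\int[normal_prob 0 1]_x (h x)%:E)%E \is a fin_num.
  by rewrite ge0_fin_numE ?(ltW int_gt0) // (le_lt_trans int_le) ?ltry.
rewrite /lognormal_laplace -/h fine_gt0 /= ?int_gt0 ?(le_lt_trans int_le) ?ltry //=.
by rewrite -lee_fin fineK.
Qed.

End lognormal_laplace.

Section reservation_price.
Variables (R : realType) (T r nu mu eta sigma s0 lambda gamma : R).
Hypotheses (T_gt0 : 0 < T) (eta_gt0 : 0 < eta) (sigma_gt0 : 0 < sigma)
  (s0_gt0 : 0 < s0) (lambda_gt0 : 0 < lambda) (gamma_gt0 : 0 < gamma).

Local Notation d := (dfun T r nu mu eta sigma s0 lambda gamma).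
Local Notation g := (gfun T r nu mu eta sigma s0 lambda gamma).
Local Notation p := (pfun T r nu mu eta sigma s0 lambda gamma).
Local Notation w := (wfun T r nu mu eta sigma s0 lambda gamma).
Local Notation rs := (rhostar T r nu mu eta sigma s0 lambda gamma).

Let K := lambda * gamma * s0 * eta ^+ 2 * T * expR ((nu - eta ^+ 2 / 2) * T).
Let W0 := lambertW K.
Let C := expR (- r * T) / (gamma * eta ^+ 2 * T).
Let q rho := w rho / (1 - rho ^+ 2).

Let K_gt0 : 0 < K.
Proof. by rewrite !mulr_gt0 ?expR_gt0 ?exprn_gt0. Qed.

Let W0_gt0 : 0 < W0.
Proof. by have [] := lambertW_spec K_gt0. Qed.

Let C_gt0 : 0 < C.
Proof. by rewrite divr_gt0 ?expR_gt0 // !mulr_gt0 ?exprn_gt0. Qed.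

Let W0_rs : W0 * rs = eta * T * mpr r mu sigma.
Proof. by rewrite /rhostar -/K -/W0; field; rewrite gt_eqF. Qed.

Let wfun_arg rho :
  s0 * eta ^+ 2 * T * expR (drift T r nu mu eta sigma rho) * theta lambda gamma rho
  = W0 * expR W0 * (1 - rho ^+ 2) * expR (- (W0 * rs * rho)).
Proof.
have [_ ->] := lambertW_spec K_gt0; rewrite W0_rs /K /drift /theta.
have -> : (nu - eta * rho * mpr r mu sigma - eta ^+ 2 / 2) * T
  = (nu - eta ^+ 2 / 2) * T + - (eta * T * mpr r mu sigma * rho) by ring.
by rewrite expRD; ring.
Qed.

Let wfun_spec rho : -1 < rho < 1 -> 0 < w rho /\
  w rho * expR (w rho) = s0 * eta ^+ 2 * T * expR (drift T r nu mu eta sigma rho)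
    * theta lambda gamma rho.
Proof.
move=> /andP[rho_gtN1 rho_lt1]; apply: lambertW_spec.
by rewrite wfun_arg !mulr_gt0 ?expR_gt0 //; nra.
Qed.

Let wfun_root rho : -1 < rho < 1 -> profile_root W0 rs rho (q rho).
Proof.
move=> rho_bd; have [w_gt0 wE] := wfun_spec rho_bd.
have y_gt0 : 0 < 1 - rho ^+ 2 by case/andP: rho_bd; nra.
split; first by rewrite divr_gt0.
have -> : q rho * expR (q rho * (1 - rho ^+ 2) + W0 * rs * rho)
    = w rho * expR (w rho) / (1 - rho ^+ 2) * expR (W0 * rs * rho).
  by rewrite /q (divfK (lt0r_neq0 y_gt0)) expRD; field; exact: lt0r_neq0.
rewrite wE wfun_arg expRN; field.
by rewrite !gt_eqF ?expR_gt0.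
Qed.

Let bd0 : -1 < (0 : R) < 1.
Proof. by rewrite ltrN10 ltr01. Qed.

Let q0 : q 0 = W0.
Proof.
by apply: (profile_root_unique _ (wfun_root bd0) (profile_root0 W0_gt0 _)); rewrite expr0n subr0.
Qed.

Let q_rs : -1 < rs < 1 -> q rs = W0.
Proof.
move=> rs_bd; apply: (profile_root_unique _ (wfun_root rs_bd) (profile_root_rs W0_gt0 _)).
by case/andP: rs_bd; nra.
Qed.

Let dfun_profile rho : -1 < rho < 1 -> d rho = C * profile rho (q rho).
Proof.
move=> /andP[rho_gtN1 rho_lt1]; have y_neq0 : 1 - rho ^+ 2 != 0 by rewrite gt_eqF //; nra.
by rewrite /dfun /theta /profile /q /C; field; rewrite y_neq0 !gt_eqF.
Qed.

Let gfun_profile rho : -1 < rho < 1 ->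
  g rho = C * (q rho * expR (eta ^+ 2 / 2 * T) + q rho ^+ 2 * (1 - rho ^+ 2) / 2).
Proof.
move=> /andP[rho_gtN1 rho_lt1]; have y_neq0 : 1 - rho ^+ 2 != 0 by rewrite gt_eqF //; nra.
by rewrite /gfun /theta /q /C; field; rewrite y_neq0 !gt_eqF.
Qed.

Let rhostar_gap : C * (W0 * rs) ^+ 2 / 2
  = expR (- r * T) * ((mu - r) ^+ 2 * T) / (2 * gamma * sigma ^+ 2).
Proof. by rewrite W0_rs /mpr /C; field; rewrite !gt_eqF. Qed.

Lemma dfun_increasing a b : rs <= a -> -1 < a -> a < b -> b < 1 -> d a < d b.
Proof.
move=> rs_le_a a_gtN1 ab b_lt1.
have a_bd : -1 < a < 1 by rewrite a_gtN1 (lt_trans ab).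
have b_bd : -1 < b < 1 by rewrite b_lt1 (lt_trans a_gtN1).
rewrite !dfun_profile // ltr_pM2l //.
apply: (profile_increasing W0_gt0 a_gtN1 ab b_lt1 rs_le_a); exact: wfun_root.
Qed.

Lemma dfun_decreasing a b : b <= rs -> -1 < a -> a < b -> b < 1 -> d b < d a.
Proof.
move=> b_le_rs a_gtN1 ab b_lt1.
have a_bd : -1 < a < 1 by rewrite a_gtN1 (lt_trans ab).
have b_bd : -1 < b < 1 by rewrite b_lt1 (lt_trans a_gtN1).
rewrite !dfun_profile // ltr_pM2l //.
apply: (profile_decreasing W0_gt0 a_gtN1 ab b_lt1 b_le_rs); exact: wfun_root.
Qed.

Lemma dfun_rhostar : -1 < rs < 1 ->
  d rs = d 0 - expR (- r * T) * ((mu - r) ^+ 2 * T) / (2 * gamma * sigma ^+ 2).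
Proof.
move=> rs_bd; rewrite !dfun_profile // q_rs // q0 -rhostar_gap /profile.
by field.
Qed.

Lemma gfun_rhostar : -1 < rs < 1 ->
  g rs = g 0 - expR (- r * T) * ((mu - r) ^+ 2 * T) / (2 * gamma * sigma ^+ 2).
Proof.
move=> rs_bd; rewrite !gfun_profile // q_rs // q0 -rhostar_gap.
by field.
Qed.

Let dfun_ge_rhostar rho : -1 < rho < 1 ->
  d 0 - expR (- r * T) * ((mu - r) ^+ 2 * T) / (2 * gamma * sigma ^+ 2) <= d rho.
Proof.
move=> rho_bd; have y_ge0 : 0 <= 1 - rho ^+ 2 by case/andP: rho_bd; nra.
have -> : d 0 - expR (- r * T) * ((mu - r) ^+ 2 * T) / (2 * gamma * sigma ^+ 2)
    = C * profile rs W0.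
  by rewrite dfun_profile // q0 -rhostar_gap /profile; field.
rewrite dfun_profile // ler_pM2l //.
apply: (profile_ge_rs W0_gt0 y_ge0); exact: wfun_root.
Qed.

Let dfun_le_pfun rho : -1 < rho < 1 -> d rho <= p rho.
Proof.
move=> rho_bd; have [w_gt0 wE] := wfun_spec rho_bd.
have rho_y_gt0 : 0 < 1 - rho ^+ 2 by case/andP: rho_bd; nra.
set s := eta * Num.sqrt T.
set y := theta lambda gamma rho * s0 * expR (drift T r nu mu eta sigma rho).
have s_gt0 : 0 < s by rewrite mulr_gt0 ?sqrtr_gt0.
have s2 : s ^+ 2 = eta ^+ 2 * T by rewrite exprMn sqr_sqrtr // ltW.
have y_gt0 : 0 < y by rewrite !mulr_gt0 ?expR_gt0.
have wE' : w rho * expR (w rho) = s ^+ 2 * y by rewrite wE s2 /y; ring.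
have /andP[L_gt0 L_le] := lognormal_laplace_bound s_gt0 y_gt0 w_gt0 wE'.
have ln_le : ln (lognormal_laplace s y) <= - (w rho + w rho ^+ 2 / 2) / s ^+ 2.
  by rewrite -[leRHS]expRK ler_ln ?posrE ?expR_gt0.
have -> : d rho = - (expR (- r * T) / (gamma * (1 - rho ^+ 2)))
    * (- (w rho + w rho ^+ 2 / 2) / s ^+ 2).
  by rewrite s2 /dfun /theta; field; rewrite !gt_eqF.
apply: ler_wnM2l ln_le.
by rewrite oppr_le0 divr_ge0 ?expR_ge0 // mulr_ge0 ?ltW.
Qed.

Lemma pfun_ge rho : -1 < rho < 1 ->
  d 0 - expR (- r * T) / (2 * gamma) * ((mu - r) / sigma) ^+ 2 * T <= p rho.
Proof.
move=> rho_bd; apply: le_trans (dfun_le_pfun rho_bd).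
have -> : expR (- r * T) / (2 * gamma) * ((mu - r) / sigma) ^+ 2 * T
    = expR (- r * T) * ((mu - r) ^+ 2 * T) / (2 * gamma * sigma ^+ 2).
  by field; rewrite !gt_eqF.
exact: dfun_ge_rhostar.
Qed.

Lemma Vfun_ge x0 rho : -1 < rho < 1 ->
  - (1 / gamma) * expR (- gamma * expR (r * T) * (x0 + d 0))
    <= Vfun T r nu mu eta sigma s0 lambda gamma x0 rho.
Proof.
move=> rho_bd; have := pfun_ge rho_bd.
rewrite /Vfun ler_nM2l ?oppr_lt0 ?divr_gt0 // ler_expR.
set e := expR (r * T); have e_gt0 : 0 < e by exact: expR_gt0.
have -> : expR (- r * T) = e^-1 by rewrite mulNr expRN.
move=> p_ge; have := ler_wpM2l (ltW (mulr_gt0 gamma_gt0 e_gt0)) p_ge.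
have -> : gamma * e * (d 0 - e^-1 / (2 * gamma) * ((mu - r) / sigma) ^+ 2 * T)
    = gamma * e * d 0 - mpr r mu sigma ^+ 2 / 2 * T.
  by rewrite /mpr; field; rewrite !gt_eqF.
nra.
Qed.

End reservation_price.

Theorem proposition2 (R : realType) (T r nu mu x0 eta sigma s0 lambda gamma : R)
  (hT : 0 < T) (heta : 0 < eta) (hsigma : 0 < sigma) (hs0 : 0 < s0)
  (hlambda : 0 < lambda) (hgamma : 0 < gamma) :
  let d := dfun T r nu mu eta sigma s0 lambda gamma in
  let g := gfun T r nu mu eta sigma s0 lambda gamma in
  let p := pfun T r nu mu eta sigma s0 lambda gamma in
  let V := Vfun T r nu mu eta sigma s0 lambda gamma x0 in
  let rs := rhostar T r nu mu eta sigma s0 lambda gamma in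
  let c := expR (- r * T) * ((mu - r) ^+ 2 * T) / (2 * gamma * sigma ^+ 2) in
  (rs <= -1 ->
     forall a b : R, -1 < a -> a < b -> b < 1 -> d a < d b) /\
  (1 <= rs ->
     forall a b : R, -1 < a -> a < b -> b < 1 -> d b < d a) /\
  (-1 < rs < 1 ->
     (forall a b : R, -1 < a -> a < b -> b < rs -> d b < d a) /\
     (forall a b : R, rs < a -> a < b -> b < 1 -> d a < d b) /\
     d rs = d 0 - c /\
     g rs = g 0 - c /\
     (forall rho : R, -1 < rho < 1 ->
        d 0 - expR (- r * T) / (2 * gamma) * ((mu - r) / sigma) ^+ 2 * T <= p rho) /\
     (forall rho : R, -1 < rho < 1 ->
        - (1 / gamma) * expR (- gamma * expR (r * T) * (x0 + d 0)) <= V rho)).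
Proof.
move=> d g p V rs c.
split=> [rs_le a b a_gtN1 ab b_lt1 | ].
  exact: dfun_increasing (le_trans rs_le (ltW a_gtN1)) a_gtN1 ab b_lt1.
split=> [rs_ge a b a_gtN1 ab b_lt1 | rs_bd].
  exact: dfun_decreasing (le_trans (ltW b_lt1) rs_ge) a_gtN1 ab b_lt1.
split=> [a b a_gtN1 ab b_lt_rs | ].
  exact: dfun_decreasing (ltW b_lt_rs) a_gtN1 ab (lt_trans b_lt_rs (proj2 (andP rs_bd))).
split=> [a b rs_lt_a ab b_lt1 | ].
  exact: dfun_increasing (ltW rs_lt_a) (lt_trans (proj1 (andP rs_bd)) rs_lt_a) ab b_lt1.
split; first exact: dfun_rhostar.
split; first exact: gfun_rhostar.
split=> rho rho_bd; first exact: pfun_ge.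
exact: Vfun_ge.
Qed.
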